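(* Let $k>0$ and consider the system of ODEs, for $r>0$, $\theta$, $z$, $p_R$, $p_S$ real, \[ \dot r = p_R,\quad \dot\theta = \frac{p_S}{r^2},\quad \dot z = \frac{p_S}{2},\quad \dot p_R = \frac{p_S^2}{r^3} - \frac{2kr^3}{(r^4+16z^2)^{3/2}},\quad \dot p_S = -\frac{8kr^2 z}{(r^4+16z^2)^{3/2}}, \] with $H = \frac{1}{2}\big(p_R^2 + \frac{p_S^2}{r^2}\big) - \frac{k}{\sqrt{r^4+16z^2}}$ (a conserved quantity). If $H<0$, then every solution is bounded, and along it $\sqrt{r^4+16z^2} \le \frac{k}{|H|}$.
   Context: This system describes nonholonomic motion of a point particle on the Heisenberg group $\mathbb{H}^1$ (horizontal distribution spanned by $X=\partial_x-\frac y2\partial_z$, $Y=\partial_y+\frac x2\partial_z$, sub-Riemannian metric $dx^2+dy^2$) in the potential $U=-k/\sqrt{(x^2+y^2)^2+16z^2}$, written in cylindrical coordinates $x=r\cos\theta$, $y=r\sin\theta$; $p_R,p_S$ are the momenta with respect to the horizontal frame $R=\partial_r$, $S=\partial_\theta+\frac{r^2}{2}\partial_z$. *)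

From Stdlib Require Import Reals.
From Coquelicot Require Import Coquelicot.
Open Scope R_scope.

Definition rho (r z : R) : R := sqrt (r ^ 4 + 16 * z ^ 2).

Definition energy (k r z pR pS : R) : R :=
  / 2 * (pR ^ 2 + pS ^ 2 / r ^ 2) - k / rho r z.

Definition is_solution (k : R) (a b : Rbar) (r th z pR pS : R -> R) : Prop :=
  forall t : R, Rbar_lt a t -> Rbar_lt t b ->
    0 < r t /\
    is_derive r t (pR t) /\
    is_derive th t (pS t / r t ^ 2) /\
    is_derive z t (pS t / 2) /\
    is_derive pR t (pS t ^ 2 / r t ^ 3 - 2 * k * r t ^ 3 / rho (r t) (z t) ^ 3) /\
    is_derive pS t (- (8 * k * r t ^ 2 * z t) / rho (r t) (z t) ^ 3).

From Stdlib Require Import Reals Lra Lia.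
From Coquelicot Require Import Coquelicot.
Open Scope R_scope.

(* The energy H is a first integral: its derivative along the flow vanishes
   identically, so by the mean value theorem it keeps its initial value H0 on
   the whole interval of existence. The kinetic part of H is nonnegative,
   hence -k/rho <= H0 < 0, i.e. rho <= k/|H0|. Finally
   rho = sqrt((r^2)^2 + (4z)^2) dominates both r^2 and 4|z|, which bounds r
   and z. *)

Lemma rho_sqr_sum (r z : R) : rho r z = sqrt ((r ^ 2) ^ 2 + (4 * z) ^ 2).
Proof. unfold rho; f_equal; ring. Qed.

Lemma rho_gt0 (r z : R) : 0 < r -> 0 < rho r z.
Proof.
intros Hr; apply sqrt_lt_R0.
assert (0 < r ^ 4) by (apply pow_lt; lra).
assert (0 <= z ^ 2) by apply pow2_ge_0.
lra.
Qed.

Lemma sqr_le_rho (r z : R) : r ^ 2 <= rho r z.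
Proof.
rewrite rho_sqr_sum.
apply Rle_trans with (2 := proj1 (sqrt_plus_sqr _ _)).
apply Rle_trans with (2 := Rmax_l _ _).
apply RRle_abs.
Qed.

Lemma Rabs_le_rho (r z : R) : Rabs r <= 1 + rho r z /\ Rabs z <= 1 + rho r z.
Proof.
assert (Habs_r : Rabs r <= 1 + r ^ 2).
{ rewrite <- pow2_abs. pose proof (Rabs_pos r). nra. }
assert (Habs_z : 4 * Rabs z <= rho r z).
{ rewrite rho_sqr_sum.
  apply Rle_trans with (2 := proj1 (sqrt_plus_sqr _ _)).
  apply Rle_trans with (2 := Rmax_r _ _).
  rewrite Rabs_mult, (Rabs_right 4) by lra. lra. }
pose proof (sqr_le_rho r z). pose proof (Rabs_pos z). lra.
Qed.

Lemma potential_le_energy (k r z pR pS : R) :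
  - (k / rho r z) <= energy k r z pR pS.
Proof.
unfold energy.
assert (0 <= pS ^ 2 / r ^ 2).
{ apply Rmult_le_pos; [apply pow2_ge_0|].
  destruct (Req_dec r 0) as [->|Hr].
  - rewrite pow_i, Rinv_0 by lia. lra.
  - apply Rlt_le, Rinv_0_lt_compat, pow2_gt_0, Hr. }
pose proof (pow2_ge_0 pR). lra.
Qed.

Lemma rho_le_of_energy_lt0 (k r z pR pS E : R) :
  energy k r z pR pS = E -> E < 0 -> rho r z <= k / Rabs E.
Proof.
intros HE Hneg.
pose proof (potential_le_energy k r z pR pS) as Hpot; rewrite HE in Hpot.
rewrite Rabs_left by lra.
assert (Hrho : 0 < rho r z).
{ destruct (Rle_lt_or_eq_dec 0 (rho r z) (sqrt_pos _)) as [|Hrho0]; [assumption|].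
  rewrite <- Hrho0, Rdiv_0_r in Hpot. lra. }
apply Rmult_le_reg_r with (- E); [lra|].
unfold Rdiv; rewrite Rmult_assoc, Rinv_l, Rmult_1_r by lra.
apply Rmult_le_compat_l with (r := rho r z) in Hpot; [|lra].
replace (rho r z * - (k / rho r z)) with (- k) in Hpot by (field; lra).
lra.
Qed.

Lemma is_derive_energy (k : R) (r z pR pS : R -> R) (t : R) :
  0 < r t ->
  is_derive r t (pR t) ->
  is_derive z t (pS t / 2) ->
  is_derive pR t (pS t ^ 2 / r t ^ 3 - 2 * k * r t ^ 3 / rho (r t) (z t) ^ 3) ->
  is_derive pS t (- (8 * k * r t ^ 2 * z t) / rho (r t) (z t) ^ 3) ->
  is_derive (fun s => energy k (r s) (z s) (pR s) (pS s)) t 0.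
Proof.
intros Hr Dr Dz DpR DpS.
pose proof (rho_gt0 (r t) (z t) Hr) as Hrho.
assert (Hsum : 0 < r t ^ 4 + 16 * z t ^ 2).
{ apply sqrt_lt_0_alt; rewrite sqrt_0; exact Hrho. }
unfold energy, rho in *; auto_derive.
- simpl in Hrho; repeat split; try (eexists; eassumption); nra.
- assert (Er : Derive (fun s => r s) t = pR t) by now apply is_derive_unique.
  assert (Ez : Derive (fun s => z s) t = pS t / 2) by now apply is_derive_unique.
  assert (EpR : Derive (fun s => pR s) t = _) by (apply is_derive_unique; exact DpR).
  assert (EpS : Derive (fun s => pS s) t = _) by (apply is_derive_unique; exact DpS).
  rewrite Er, Ez, EpR, EpS.
  (* [auto_derive] has expanded the powers; [simpl] expands those of the
     hypotheses as well, so that [field] sees the same atoms. *)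
  simpl in *; field; split; lra.
Qed.

Lemma Rbar_interval_convex (a b : Rbar) (x y c : R) :
  Rbar_lt a x -> Rbar_lt x b -> Rbar_lt a y -> Rbar_lt y b ->
  Rmin x y <= c <= Rmax x y -> Rbar_lt a c /\ Rbar_lt c b.
Proof.
intros ax xb ay yb Hc.
assert (a_min : Rbar_lt a (Rmin x y)) by (apply Rmin_case; assumption).
assert (max_b : Rbar_lt (Rmax x y) b) by (apply Rmax_case; assumption).
split.
- apply Rbar_lt_le_trans with (1 := a_min); simpl; lra.
- apply Rbar_le_lt_trans with (2 := max_b); simpl; lra.
Qed.

Lemma is_derive_0_const (f : R -> R) (a b : Rbar) (x y : R) :
  (forall t : R, Rbar_lt a t -> Rbar_lt t b -> is_derive f t 0) ->
  Rbar_lt a x -> Rbar_lt x b -> Rbar_lt a y -> Rbar_lt y b ->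
  f y = f x.
Proof.
intros Df ax xb ay yb.
destruct (MVT_abs f (fun _ => 0) x y) as (c & Hc & _).
- intros c Hc. apply is_derive_Reals, Df;
    apply (Rbar_interval_convex a b x y c); assumption.
- rewrite Rabs_R0, Rmult_0_l in Hc.
  apply Rminus_diag_uniq, Rabs_eq_0, Hc.
Qed.

Lemma energy_conserved (k : R) (a b : Rbar) (r th z pR pS : R -> R) (t0 t : R) :
  is_solution k a b r th z pR pS ->
  Rbar_lt a t0 -> Rbar_lt t0 b -> Rbar_lt a t -> Rbar_lt t b ->
  energy k (r t) (z t) (pR t) (pS t) = energy k (r t0) (z t0) (pR t0) (pS t0).
Proof.
intros Hsol at0 t0b at_ tb.
apply (is_derive_0_const (fun s => energy k (r s) (z s) (pR s) (pS s)) a b);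
  try assumption.
intros s as_ sb.
destruct (Hsol s as_ sb) as (Hr & Dr & _ & Dz & DpR & DpS).
apply is_derive_energy; assumption.
Qed.

Theorem theorem1 (k : R) (a b : Rbar) (r th z pR pS : R -> R) (t0 : R) :
  0 < k ->
  Rbar_lt a t0 -> Rbar_lt t0 b ->
  is_solution k a b r th z pR pS ->
  energy k (r t0) (z t0) (pR t0) (pS t0) < 0 ->
  (exists M : R, forall t : R, Rbar_lt a t -> Rbar_lt t b ->
      Rabs (r t) <= M /\ Rabs (z t) <= M) /\
  (forall t : R, Rbar_lt a t -> Rbar_lt t b ->
      rho (r t) (z t) <= k / Rabs (energy k (r t0) (z t0) (pR t0) (pS t0))).
Proof.
intros _ at0 t0b Hsol Hneg.
set (H0 := energy k (r t0) (z t0) (pR t0) (pS t0)) in *.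
assert (Hrho : forall t : R, Rbar_lt a t -> Rbar_lt t b -> rho (r t) (z t) <= k / Rabs H0).
{ intros t at_ tb.
  apply (rho_le_of_energy_lt0 k _ _ (pR t) (pS t)); [|exact Hneg].
  apply (energy_conserved k a b r th z pR pS); assumption. }
split; [|exact Hrho].
exists (1 + k / Rabs H0).
intros t at_ tb.
destruct (Rabs_le_rho (r t) (z t)) as [Hr Hz].
pose proof (Hrho t at_ tb).
split; lra.
Qed.
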